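(* Let $m\ge3$, $\Lambda\in\mathbb{R}$, and let $u:(\mathbb{R}^m\setminus\{0\})\times(-\infty,\Lambda)\to\mathbb{R}$ be a solution of the heat equation $\partial_tu=\Delta u$ with respect to the Euclidean metric. Suppose there exist $C>0$ and $0<\nu<m-2$ with $|\nabla^\ell u(x,t)|\le C|x|^{-\nu-\ell}$ for all $x\neq0$, $t\in(-\infty,\Lambda)$ and $\ell\in\{0,1,2\}$. Then $u\equiv0$. *)

From HB Require Import structures.
From mathcomp Require Import all_boot all_order all_algebra.
From mathcomp Require Import all_classical all_reals all_analysis.
Set Implicit Arguments. Unset Strict Implicit. Unset Printing Implicit Defensive.
Import Order.TTheory GRing.Theory Num.Theory numFieldNormedType.Exports.
Local Open Scope ring_scope.

Section Heat.
Context {R : realType} {m : nat}.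

Definition evec (i : 'I_m) : 'rV[R]_m := delta_mx 0 i.

Definition enorm (x : 'rV[R]_m) : R := Num.sqrt (\sum_i x 0 i ^+ 2).

Definition dx (u : 'rV[R]_m -> R -> R) (i : 'I_m) : 'rV[R]_m -> R -> R :=
  fun x t => 'D_(evec i) (fun y => u y t) x.

Definition dt (u : 'rV[R]_m -> R -> R) : 'rV[R]_m -> R -> R :=
  fun x t => derive1 (u x) t.

Definition laplacian (u : 'rV[R]_m -> R -> R) x t : R :=
  \sum_i dx (dx u i) i x t.

Definition grad_norm (u : 'rV[R]_m -> R -> R) x t : R :=
  Num.sqrt (\sum_i dx u i x t ^+ 2).
Definition hess_norm (u : 'rV[R]_m -> R -> R) x t : R :=
  Num.sqrt (\sum_i \sum_j dx (dx u j) i x t ^+ 2).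

Definition uncurry2 (f : 'rV[R]_m -> R -> R) : 'rV[R]_m * R -> R :=
  fun p => f p.1 p.2.

Definition heat_solution (Lam : R) (u : 'rV[R]_m -> R -> R) : Prop :=
  forall x t, x != 0 -> t < Lam ->
  [/\ forall i, derivable (fun y => u y t) x (evec i),
      forall i j, derivable (fun y => dx u j y t) x (evec i),
      derivable (u x) t 1,
      [/\ {for (x, t), continuous (uncurry2 u)},
          forall i, {for (x, t), continuous (uncurry2 (dx u i))},
          forall i j, {for (x, t), continuous (uncurry2 (dx (dx u j) i))} &
          {for (x, t), continuous (uncurry2 (dt u))}] &
      dt u x t = laplacian u x t].

End Heat.

From HB Require Import structures.
From mathcomp Require Import all_boot all_order all_algebra.
From mathcomp Require Import all_classical all_reals all_analysis.
From mathcomp Require Import ring lra.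
Import Order.TTheory GRing.Theory Num.Theory numFieldNormedType.Exports.
Local Open Scope ring_scope.
Local Open Scope classical_set_scope.

(* Weak maximum principle against an explicit barrier.  Suppose [sg u(x,t) > 0]
   with [|sg| <= 1] (so both signs are handled at once) and put
   [delta = sg u(x,t) / 8].  With [p = -nu/2], [q = 1 - m/2] and
   [K = 2m - 4 - 2nu > 0], the function
     W(y,tau) = C (|y|^2 + K (tau - t0))^p + B |y|^(2q) + M + eta (tau - t0)
   is a strict supersolution, [d_t W - Delta W >= eta > 0], on [R^m \ 0]: the first
   term is a supersolution precisely because [nu < m - 2], the second is harmonic.
   So [sg u - W] cannot attain its maximum over a cylinder
   [{r1 <= |y|^2 <= r2} x [t0, t]] off the parabolic boundary.  On that boundary the
   decay [|u| <= C |y|^(-nu)] puts [sg u] below [W]: at [tau = t0] through the first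
   term, on the outer sphere through [M], on the inner sphere through [B |y|^(2q)],
   which beats [C |y|^(-nu)] near [0] as [2q < -nu].  Choosing the parameters so
   that [W(x,t) <= 4 delta] gives a contradiction. *)

Section RealCalculus.
Context {R : realType}.
Implicit Types (f df : R -> R) (a b d p s : R).

Lemma le0_ger_powR p a b : p <= 0 -> 0 < a -> a <= b -> b `^ p <= a `^ p.
Proof.
move=> p0 a0 ab; have b0 : 0 < b by apply: lt_le_trans ab.
have E x : x `^ p = (x `^ (- p))^-1 by rewrite -powRN opprK.
rewrite !E lef_pV2 ?posrE ?powR_gt0 //.
by apply: ge0_ler_powR; rewrite ?nnegrE ?oppr_ge0 // ltW.
Qed.

Lemma powRK_inv a p : 0 < a -> p != 0 -> (a `^ p^-1) `^ p = a.
Proof. by move=> a0 p0; rewrite -powRrM mulVf // powRr1 // ltW. Qed.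

Lemma is_derive_line_deriv {m : nat} {g : 'rV[R]_m -> R} {x e : 'rV[R]_m} {h : R} :
  derivable g (x + h *: e) e ->
  is_derive h 1 (fun h => g (x + h *: e)) ('D_e g (x + h *: e)).
Proof.
have E : (fun k : R => k^-1 *: (((fun k => g (x + k *: e)) \o shift h) (k *: 1) - g (x + h *: e)))
  = (fun k : R => k^-1 *: ((g \o shift (x + h *: e)) (k *: e) - g (x + h *: e))).
  apply/funext => k /=; congr (_ *: (g _ - _)).
  by rewrite /shift /= [k *: 1]mulr1 scalerDl addrCA addrC.
by move=> D; split; [rewrite /derivable E | rewrite /derive E].
Qed.

Lemma dnbhs0_ball (P : R -> Prop) : (\forall h \near 0^', P h) ->
  exists2 e : R, 0 < e & forall h, h != 0 -> `|h| < e -> P h.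
Proof.
move=> /nbhs_ballP[e e0 He]; exists e => // h h0 he; apply: He => //.
by rewrite /ball /= sub0r normrN.
Qed.

Lemma is_derive_dquotient {f : R -> R} {s b : R} : is_derive s (1 : R) f b ->
  (fun h => h^-1 * (f (h + s) - f s)) @ 0^' --> b.
Proof.
move=> [fd <-].
have -> : (fun h => h^-1 * (f (h + s) - f s)) =
    (fun h : R => h^-1 *: ((f \o shift s) (h *: 1) - f s)).
  by apply/funext => h; rewrite /= /shift /= [h *: 1]mulr1.
exact: fd.
Qed.

(* Otherwise [f'] increases from [f'(0) = 0], and the mean value theorem makes [f]
   increase to the right of [0]. *)
Lemma derive2_le0_at_max f df a :
  (\forall h \near (0 : R), is_derive h (1 : R) f (df h)) ->
  is_derive (0 : R) (1 : R) df a ->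
  (\forall h \near (0 : R), f h <= f 0) -> a <= 0.
Proof.
move=> fd_near dfa fmax_near.
have [d d0 Hd] : exists2 d : R, 0 < d &
    forall h : R, `|h| < d -> is_derive h (1 : R) f (df h) /\ f h <= f 0.
  have /nbhs_ballP[d d0 Hd] :
      \forall h \near (0 : R), is_derive h (1 : R) f (df h) /\ f h <= f 0.
    by near=> h; split; near: h.
  by exists d => // h hd; apply: Hd; rewrite /ball /= sub0r normrN.
have itv h : h \in `]-d, d[%R -> `|h| < d by rewrite in_itv /= -ltr_norml.
have df0 : df 0 = 0.
  have [[_ <-] _] := Hd 0 ltac:(by rewrite normr0).
  have [|t /itv /Hd[[]]//||t /itv /Hd[]//|//] := @derive1_at_max R f (-d) d 0.
  - lra.
  - by rewrite in_itv /= oppr_lt0 d0.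
rewrite leNgt; apply/negP => a0.
have /dnbhs0_ball[e e0 He] := cvgr_gt _ (is_derive_dquotient dfa) (a / 2) ltac:(lra).
pose h0 := Num.min e d / 2.
have [me md] : Num.min e d <= e /\ Num.min e d <= d by rewrite !ge_min !lexx orbT.
have h00 : 0 < h0 by rewrite divr_gt0 // lt_min e0 d0.
have [h0e h0d] : h0 < e /\ h0 < d by rewrite /h0 in h00 *; split; lra.
have df_pos c : c \in `]0, h0[%R -> 0 < df c.
  rewrite in_itv /= => /andP[c0 ch].
  have := He c (lt0r_neq0 c0) ltac:(rewrite gtr0_norm //; lra).
  rewrite addr0 df0 subr0 => quotient_gt.
  have : 0 < c^-1 * df c by apply: lt_trans quotient_gt; rewrite divr_gt0.
  by rewrite pmulr_rgt0 // invr_gt0.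
have f_deriv x : x \in `]0, h0[%R -> is_derive x 1 f (df x).
  by rewrite in_itv /= => /andP[x0 xh]; apply: (Hd _ _).1; rewrite gtr0_norm //; lra.
have f_cont : {within `[0, h0], continuous f}.
  apply: continuous_in_subspaceT => x; rewrite inE /= in_itv /= => /andP[x0 xh].
  have [[fx _] _] := Hd x ltac:(rewrite ger0_norm //; lra).
  exact/differentiable_continuous/derivable1_diffP.
have [c cin Hc] := @MVT R f df 0 h0 h00 f_deriv f_cont.
have [_] := Hd h0 ltac:(by rewrite gtr0_norm).
by rewrite -subr_le0 Hc subr0 leNgt pmulr_lgt0 // df_pos.
Unshelve. all: by end_near.
Qed.

Lemma derive_ge0_at_left_max f b s d :
  0 < d -> is_derive s 1 f b -> (forall t, s - d < t -> t <= s -> f t <= f s) -> 0 <= b.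
Proof.
move=> d0 fb fmax; rewrite leNgt; apply/negP => b0.
have /dnbhs0_ball[e e0 He] := cvgr_lt _ (is_derive_dquotient fb) (b / 2) ltac:(lra).
pose h0 := - (Num.min e d / 2).
have [me md] : Num.min e d <= e /\ Num.min e d <= d by rewrite !ge_min !lexx orbT.
have h00 : h0 < 0 by rewrite oppr_lt0 divr_gt0 // lt_min e0 d0.
have [h0e h0d] : - h0 < e /\ - h0 < d by rewrite /h0 in h00 *; split; lra.
have := He h0 (ltr0_neq0 h00) ltac:(by rewrite ltr0_norm).
have : f (h0 + s) <= f s by apply: fmax; lra.
rewrite -subr_le0 => fle.
have : 0 <= h0^-1 * (f (h0 + s) - f s) by rewrite mulr_le0 // invr_le0 ltW.
lra.
Qed.

End RealCalculus.

Section SquaredNorm.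
Context {R : realType} {m : nat}.
Implicit Types (x y : 'rV[R]_m) (i : 'I_m).

Definition sqnorm x : R := \sum_i x 0 i ^+ 2.

Lemma sqnorm_ge0 x : 0 <= sqnorm x.
Proof. by rewrite sumr_ge0 // => i _; rewrite sqr_ge0. Qed.

Lemma sqr_coord_le_sqnorm x i : x 0 i ^+ 2 <= sqnorm x.
Proof. by rewrite /sqnorm (bigD1 i) //= lerDl sumr_ge0 // => j _; rewrite sqr_ge0. Qed.

Lemma sqnorm_gt0 x : (0 < sqnorm x) = (x != 0).
Proof.
apply/idP/idP => [|x0].
  by apply: contraTneq => ->; rewrite /sqnorm big1 ?ltxx // => i _; rewrite mxE expr0n.
rewrite lt_def sqnorm_ge0 andbT; apply: contra x0 => /eqP sq0.
apply/eqP/matrixP => i j; rewrite (ord1 i) mxE; apply/eqP.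
by rewrite -sqrf_eq0 eq_le sqr_ge0 andbT -sq0 sqr_coord_le_sqnorm.
Qed.

Lemma sqnorm_add_evec x i h :
  sqnorm (x + h *: evec i) = sqnorm x + 2 * h * x 0 i + h ^+ 2.
Proof.
rewrite /sqnorm (bigD1 i) //= [in RHS](bigD1 i) //=.
rewrite (eq_bigr (fun j => x 0 j ^+ 2)); last first.
  by move=> j /negbTE ji; rewrite !mxE ji /= mulr0 addr0.
by rewrite !mxE !eqxx /= mulr1; ring.
Qed.

Lemma continuous_sqnorm : continuous sqnorm.
Proof.
have -> : sqnorm = \sum_i (fun y => y 0 i * y 0 i) by apply/funext => y; rewrite fct_sumE.
elim/big_ind: _ => [x|f g cf cg x|i _ x]; first exact: cst_continuous.
  exact: continuousD (cf x) (cg x).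
exact: continuousM (@coord_continuous R 1 m 0 i x) (@coord_continuous R 1 m 0 i x).
Qed.

Lemma enorm_powR x a : enorm x `^ a = sqnorm x `^ (2^-1 * a).
Proof. by rewrite powRrM powR12_sqrt // sqnorm_ge0. Qed.

Lemma compact_sqnorm_annulus r1 r2 : compact [set y | r1 <= sqnorm y <= r2].
Proof.
apply: (@subclosed_compact _ _
  [set y : 'rV[R]_m | forall i, `[-(r2 + 1), r2 + 1]%classic (y ord0 i)]).
- have -> : [set y | r1 <= sqnorm y <= r2] = sqnorm @^-1` [set s : R | s \in `[r1, r2]%R].
    by apply/seteqP; split => y /=; rewrite in_itv.
  apply: preimage_closed; first by move=> y _; exact: continuous_sqnorm.
  exact: interval_closed.
- by apply: (@rV_compact _ _ (fun=> `[-(r2 + 1), r2 + 1]%classic)) => _;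
    exact: segment_compact.
- move=> y /andP[_ yr2] i /=; rewrite in_itv /=.
  have := sqr_coord_le_sqnorm y i; rewrite (_ : ord0 = 0) // => ?.
  apply/andP; split; nra.
Qed.

End SquaredNorm.

Lemma cvg_add_evec {R : realType} {m : nat} (x : 'rV[R]_m) i :
  (fun h : R => x + h *: evec i) @ 0 --> x.
Proof.
rewrite -[X in _ --> X]addr0 -(scale0r (evec i)).
apply: cvgD; first exact: cvg_cst.
by apply: cvgZ; [exact: cvg_id | exact: cvg_cst].
Qed.

Section InteriorMaximum.
Context {R : realType} {m : nat}.
Variables (Lam sg : R) (u W : 'rV[R]_m -> R -> R).
Hypothesis heat_u : heat_solution Lam u.
Let v y tau := sg * u y tau - W y tau.

Lemma dxx_le_at_max {x : 'rV[R]_m} {s : R} {i : 'I_m} {dW : R -> R} {a : R} :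
  x != 0 -> s < Lam ->
  (\forall h \near (0 : R), is_derive h (1 : R) (fun h => W (x + h *: evec i) s) (dW h)) ->
  is_derive (0 : R) (1 : R) dW a ->
  (\forall y \near x, v y s <= v x s) ->
  sg * dx (dx u i) i x s <= a.
Proof.
move=> x0 sL dW_near dWa vmax.
have line := cvg_add_evec x i.
have x_near : \forall h \near (0 : R), x + h *: evec i != 0 by apply: cvgr_neq0 line x0.
have [_ dxu _ _ _] := heat_u x s x0 sL.
rewrite -subr_le0.
have v_line : (fun h => v (x + h *: evec i) s) =
    (sg \*: (fun h => u (x + h *: evec i) s)) - (fun h => W (x + h *: evec i) s) by [].
apply: (@derive2_le0_at_max R (fun h => v (x + h *: evec i) s)
  (fun h => sg * dx u i (x + h *: evec i) s - dW h)).
- move: x_near dW_near; apply: filterS2 => h hx dWh.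
  have [du _ _ _ _] := heat_u _ s hx sL.
  by rewrite v_line; apply: is_deriveB dWh; apply: is_deriveZ; exact: is_derive_line_deriv.
- apply: is_deriveB dWa; apply: is_deriveZ.
  have dxu0 : derivable (fun y => dx u i y s) (x + 0 *: evec i) (evec i).
    by rewrite scale0r addr0; exact: dxu.
  by have := is_derive_line_deriv dxu0; rewrite scale0r addr0.
- rewrite scale0r addr0; exact: line _ vmax.
Qed.

Lemma dt_ge_at_left_max {x : 'rV[R]_m} {s d Dt : R} :
  x != 0 -> s < Lam -> 0 < d -> is_derive s (1 : R) (W x) Dt ->
  (forall tau, s - d < tau -> tau <= s -> v x tau <= v x s) ->
  Dt <= sg * dt u x s.
Proof.
move=> x0 sL d0 WDt vmax; have [_ _ dtu _ _] := heat_u x s x0 sL.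
have du : is_derive s (1 : R) (u x) (dt u x s) by rewrite /dt derive1E; exact: derivableP.
rewrite -subr_ge0.
exact: derive_ge0_at_left_max d0 (is_deriveB (is_deriveZ sg du) WDt) vmax.
Qed.

(* At an interior maximum of [v] the heat operator applied to [v] is nonnegative,
   which a strict supersolution [W] forbids since [u] is a solution. *)
Lemma strict_supersolution_no_interior_max x s d eta (dW : 'I_m -> R -> R)
    (D2 : 'I_m -> R) Dt :
  x != 0 -> s < Lam -> 0 < d -> 0 < eta ->
  (forall i, \forall h \near (0 : R),
     is_derive h (1 : R) (fun h => W (x + h *: evec i) s) (dW i h)) ->
  (forall i, is_derive (0 : R) (1 : R) (dW i) (D2 i)) ->
  is_derive s (1 : R) (W x) Dt -> \sum_i D2 i + eta <= Dt ->
  (\forall y \near x, v y s <= v x s) ->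
  (forall tau, s - d < tau -> tau <= s -> v x tau <= v x s) ->
  False.
Proof.
move=> x0 sL d0 eta0 dW_near dWD2 WDt super vmax_space vmax_time.
have [_ _ _ _ heat_eq] := heat_u x s x0 sL.
have dt_ge := dt_ge_at_left_max x0 sL d0 WDt vmax_time.
have lap_le : sg * laplacian u x s <= \sum_i D2 i.
  rewrite /laplacian mulr_sumr; apply: ler_sum => i _.
  exact: dxx_le_at_max x0 sL (dW_near i) (dWD2 i) vmax_space.
by move: dt_ge; rewrite heat_eq; lra.
Qed.

End InteriorMaximum.

Section PowerOfQuadratic.
Context {R : realType}.
Implicit Types (A p c b h : R).

(* [A (|x + h e_i|^2 + k)^p] as a function of [h], with [c = |x|^2 + k] and [b = x_i]. *)
Definition powquad A p c b h : R := A * (c + 2 * h * b + h ^+ 2) `^ p.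

Definition powquad_d1 A p c b h : R := powquad (A * p) (p - 1) c b h * (2 * b + 2 * h).

Definition powquad_d2_0 A p c b : R :=
  A * p * ((p - 1) * c `^ (p - 2) * 4 * b ^+ 2 + 2 * c `^ (p - 1)).

Lemma is_derive_quad c b h :
  is_derive h (1 : R) (fun h => c + 2 * h * b + h ^+ 2) (2 * b + 2 * h).
Proof.
have -> : (fun h : R => c + 2 * h * b + h ^+ 2) = cst c + (2 * b) \*: id + id ^+ 2.
  by apply/funext => x; rewrite !fctE /= /GRing.scale /=; ring.
apply: is_derive_eq (is_deriveD (is_deriveD (is_derive_cst c h 1)
  (is_deriveZ (2 * b) (is_derive_id h 1))) (is_deriveX 2 (is_derive_id h 1))) _.
by rewrite /GRing.scale /= !mulr1; ring.
Qed.

Lemma is_derive_powquad A p c b h : 0 < c + 2 * h * b + h ^+ 2 ->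
  is_derive h (1 : R) (powquad A p c b) (powquad_d1 A p c b h).
Proof.
move=> Q0.
have -> : powquad A p c b =
    A \*: ((@powR R ^~ p) \o (fun h => c + 2 * h * b + h ^+ 2)) by [].
apply: is_derive_eq (is_deriveZ A (@is_derive1_comp R (@powR R ^~ p)
  (fun h => c + 2 * h * b + h ^+ 2) h _ _ (is_derive1_powR p Q0) (is_derive_quad c b h))) _.
by rewrite /powquad_d1 /powquad /GRing.scale /= !mulrA.
Qed.

Lemma is_derive_powquad_d1_0 A p c b : 0 < c ->
  is_derive (0 : R) (1 : R) (powquad_d1 A p c b) (powquad_d2_0 A p c b).
Proof.
move=> c0; have c0' : 0 < c + 2 * 0 * b + 0 ^+ 2 by rewrite mulr0 mul0r expr0n !addr0.
have -> : powquad_d1 A p c b = powquad (A * p) (p - 1) c b * (cst (2 * b) + 2 \*: id).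
  by apply/funext => h; rewrite /powquad_d1 !fctE.
apply: is_derive_eq (is_deriveM (is_derive_powquad (A * p) (p - 1) c b 0 c0')
  (is_deriveD (is_derive_cst (2 * b) (0 : R) (1 : R))
    (is_deriveZ 2 (is_derive_id (0 : R) (1 : R))))) _.
rewrite /powquad_d1 /powquad_d2_0 /powquad !fctE /GRing.scale /=.
rewrite !(mulr0, mul0r, addr0, mulr1, add0r) expr0n /= addr0.
have -> : p - 1 - 1 = p - 2 by ring.
ring.
Qed.

End PowerOfQuadratic.

Section Barrier.
Context {R : realType} {m : nat}.
Implicit Types (A B p q K M eta s c : R) (x : 'rV[R]_m).

Definition pow_barrier A p K t0 (y : 'rV[R]_m) (tau : R) : R :=
  A * (sqnorm y + K * (tau - t0)) `^ p.

Lemma pow_barrier_add_evec A p K t0 x i s h :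
  pow_barrier A p K t0 (x + h *: evec i) s =
  powquad A p (sqnorm x + K * (s - t0)) (x 0 i) h.
Proof. by rewrite /pow_barrier /powquad sqnorm_add_evec; congr (_ * _ `^ _); ring. Qed.

Lemma is_derive_pow_barrier_time A p K t0 x s : 0 < sqnorm x + K * (s - t0) ->
  is_derive s (1 : R) (pow_barrier A p K t0 x)
    (A * p * (sqnorm x + K * (s - t0)) `^ (p - 1) * K).
Proof.
move=> c0.
have affine : is_derive s (1 : R) (fun tau => sqnorm x + K * (tau - t0)) K.
  have -> : (fun tau => sqnorm x + K * (tau - t0)) = cst (sqnorm x - K * t0) + K \*: id.
    by apply/funext => tau; rewrite !fctE /= /GRing.scale /=; ring.
  apply: is_derive_eq (is_deriveD (is_derive_cst _ s 1) (is_deriveZ K (is_derive_id s 1))) _.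
  by rewrite /GRing.scale /= mulr1 add0r.
have -> : pow_barrier A p K t0 x =
    A \*: ((@powR R ^~ p) \o (fun tau => sqnorm x + K * (tau - t0))) by [].
apply: is_derive_eq (is_deriveZ A (@is_derive1_comp R (@powR R ^~ p)
  (fun tau => sqnorm x + K * (tau - t0)) s _ _ (is_derive1_powR p c0) affine)) _.
by rewrite /GRing.scale /= !mulrA.
Qed.

(* The line second derivatives add up to [A p c^(p-2) (4 (p-1) |x|^2 + 2 m c)], which for
   [p <= 0] is at most the time derivative [A p c^(p-1) K] once [K <= 2 m - 4 (1 - p)]. *)
Lemma sum_powquad_d2_0_le A p K c x :
  0 <= A -> p <= 0 -> 4 * (1 - p) <= 2 * m%:R - K -> 0 < c -> sqnorm x <= c ->
  \sum_i powquad_d2_0 A p c (x 0 i) <= A * p * c `^ (p - 1) * K.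
Proof.
move=> A0 p0 hK c0 xc.
have -> : \sum_i powquad_d2_0 A p c (x 0 i) =
    A * p * ((p - 1) * c `^ (p - 2) * 4 * sqnorm x + m%:R * 2 * c `^ (p - 1)).
  rewrite /powquad_d2_0 -mulr_sumr big_split /= -mulr_sumr sumr_const card_ord.
  by rewrite /sqnorm -mulr_natl; ring.
have -> : c `^ (p - 1) = c `^ (p - 2) * c.
  rewrite -{3}(powRr1 (ltW c0)) -powRD; last by apply/implyP => _; rewrite gt_eqF.
  by congr (_ `^ _); ring.
have Ap : A * p <= 0 by rewrite mulr_ge0_le0.
have cp0 : 0 <= c `^ (p - 2) by exact: powR_ge0.
have bracket : 0 <= 4 * (p - 1) * sqnorm x + (2 * m%:R - K) * c.
  have : 0 <= (2 * m%:R - K - 4 * (1 - p)) * c by rewrite mulr_ge0 ?subr_ge0 // ltW.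
  have : 0 <= 4 * (1 - p) * (c - sqnorm x) by rewrite mulr_ge0 ?subr_ge0 //; lra.
  lra.
rewrite -subr_ge0.
have -> : A * p * (c `^ (p - 2) * c) * K - A * p * ((p - 1) * c `^ (p - 2) * 4 * sqnorm x
    + m%:R * 2 * (c `^ (p - 2) * c)) =
  - (A * p) * (c `^ (p - 2) * (4 * (p - 1) * sqnorm x + (2 * m%:R - K) * c)) by ring.
by rewrite mulr_ge0 ?oppr_ge0 // mulr_ge0.
Qed.

Lemma continuous_pow_barrier A p K t0 (z : 'rV[R]_m * R) :
  0 < sqnorm z.1 + K * (z.2 - t0) ->
  {for z, continuous (fun z => pow_barrier A p K t0 z.1 z.2)}.
Proof.
move=> c0.
have cst_cont (k : R) : {for z, continuous (fun _ : 'rV[R]_m * R => k)} by exact: cst_continuous.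
have sqnorm_cont : {for z, continuous (fun z : 'rV[R]_m * R => sqnorm z.1)}.
  exact: continuous_comp cvg_fst (@continuous_sqnorm R m _).
have affine_cont :
    {for z, continuous (fun z : 'rV[R]_m * R => sqnorm z.1 + K * (z.2 - t0))}.
  exact: continuousD sqnorm_cont (continuousM (cst_cont K) (continuousB cvg_snd (cst_cont t0))).
have powR_cont : {for sqnorm z.1 + K * (z.2 - t0), continuous (@powR R ^~ p)}.
  apply: differentiable_continuous; apply/derivable1_diffP.
  by apply: derivable_powR; rewrite in_itv /= andbT.
exact: continuousM (cst_cont A) (continuous_comp affine_cont powR_cont).
Qed.

Definition barrier A p K B q M eta t0 (y : 'rV[R]_m) (tau : R) : R :=
  pow_barrier A p K t0 y tau + pow_barrier B q 0 t0 y tau + M + eta * (tau - t0).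

Lemma continuous_barrier A p K B q M eta t0 (z : 'rV[R]_m * R) :
  0 < sqnorm z.1 -> 0 <= K * (z.2 - t0) ->
  {for z, continuous (fun z => barrier A p K B q M eta t0 z.1 z.2)}.
Proof.
move=> z0 Kz.
have cst_cont (k : R) : {for z, continuous (fun _ : 'rV[R]_m * R => k)} by exact: cst_continuous.
apply: continuousD; last exact: continuousM (cst_cont eta) (continuousB cvg_snd (cst_cont t0)).
apply: continuousD (cst_cont M); apply: continuousD; apply: continuous_pow_barrier.
  by move: z0 Kz; lra.
by rewrite mul0r addr0.
Qed.

End Barrier.

Section BarrierSupersolution.
Context {R : realType} {m : nat}.
Variables (A p K B q M eta t0 : R).
Let W := @barrier R m A p K B q M eta t0.

Lemma is_derive_barrier_add_evec (x : 'rV[R]_m) i s h :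
  0 <= K * (s - t0) -> x + h *: evec i != 0 ->
  is_derive h (1 : R) (fun h => W (x + h *: evec i) s)
    (powquad_d1 A p (sqnorm x + K * (s - t0)) (x 0 i) h +
     powquad_d1 B q (sqnorm x + 0 * (s - t0)) (x 0 i) h).
Proof.
move=> Ks; rewrite -sqnorm_gt0 sqnorm_add_evec => xh0.
have -> : (fun h => W (x + h *: evec i) s) =
    powquad A p (sqnorm x + K * (s - t0)) (x 0 i) +
    powquad B q (sqnorm x + 0 * (s - t0)) (x 0 i) + cst (M + eta * (s - t0)).
  by apply/funext => k; rewrite /W /barrier !pow_barrier_add_evec !fctE addrA.
have Q1 : 0 < sqnorm x + K * (s - t0) + 2 * h * x 0 i + h ^+ 2 by lra.
have Q2 : 0 < sqnorm x + 0 * (s - t0) + 2 * h * x 0 i + h ^+ 2 by rewrite mul0r addr0.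
apply: is_derive_eq (is_deriveD (is_deriveD (is_derive_powquad A p _ _ _ Q1)
  (is_derive_powquad B q _ _ _ Q2)) (is_derive_cst _ _ _)) _.
by rewrite addr0.
Qed.

Lemma is_derive_barrier_time (x : 'rV[R]_m) s :
  x != 0 -> 0 <= K * (s - t0) ->
  is_derive s (1 : R) (W x) (A * p * (sqnorm x + K * (s - t0)) `^ (p - 1) * K + eta).
Proof.
rewrite -sqnorm_gt0 => x0 Ks.
have drift : is_derive s (1 : R) (fun tau => eta * (tau - t0)) eta.
  have -> : (fun tau => eta * (tau - t0)) = eta \*: id + cst (- (eta * t0)).
    by apply/funext => tau; rewrite !fctE /= /GRing.scale /=; ring.
  apply: is_derive_eq (is_deriveD (is_deriveZ eta (is_derive_id s 1)) (is_derive_cst _ s 1)) _.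
  by rewrite /GRing.scale /= mulr1 addr0.
have -> : W x = pow_barrier A p K t0 x + pow_barrier B q 0 t0 x + cst M +
    (fun tau => eta * (tau - t0)) by [].
have c1 : 0 < sqnorm x + K * (s - t0) by lra.
have c2 : 0 < sqnorm x + 0 * (s - t0) by rewrite mul0r addr0.
apply: is_derive_eq (is_deriveD (is_deriveD (is_deriveD
  (is_derive_pow_barrier_time A p K t0 x s c1) (is_derive_pow_barrier_time B q 0 t0 x s c2))
  (is_derive_cst M s 1)) drift) _.
by rewrite !mulr0 !addr0.
Qed.

Hypotheses (A0 : 0 <= A) (p0 : p <= 0) (hK : 4 * (1 - p) <= 2 * m%:R - K) (K0 : 0 <= K)
  (B0 : 0 <= B) (q0 : q <= 0) (hq : 4 * (1 - q) <= 2 * m%:R) (eta0 : 0 < eta).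

Lemma barrier_no_interior_max (Lam sg : R) (u : 'rV[R]_m -> R -> R) (x : 'rV[R]_m) (s d : R) :
  heat_solution Lam u -> x != 0 -> s < Lam -> t0 <= s -> 0 < d ->
  (\forall y \near x, sg * u y s - W y s <= sg * u x s - W x s) ->
  (forall tau, s - d < tau -> tau <= s -> sg * u x tau - W x tau <= sg * u x s - W x s) ->
  False.
Proof.
move=> heat_u x0 sL t0s d0.
have Ks : 0 <= K * (s - t0) by rewrite mulr_ge0 ?subr_ge0.
have sq0 : 0 < sqnorm x by rewrite sqnorm_gt0.
have c1 : 0 < sqnorm x + K * (s - t0) by lra.
have c2 : 0 < sqnorm x + 0 * (s - t0) by rewrite mul0r addr0.
apply: (@strict_supersolution_no_interior_max R m Lam sg u W heat_u x s d eta
  (fun i h => powquad_d1 A p (sqnorm x + K * (s - t0)) (x 0 i) h +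
              powquad_d1 B q (sqnorm x + 0 * (s - t0)) (x 0 i) h)
  (fun i => powquad_d2_0 A p (sqnorm x + K * (s - t0)) (x 0 i) +
            powquad_d2_0 B q (sqnorm x + 0 * (s - t0)) (x 0 i))
  (A * p * (sqnorm x + K * (s - t0)) `^ (p - 1) * K + eta)) => //.
- move=> i; apply: filterS (cvgr_neq0 _ (cvg_add_evec x i) x0) => h.
  exact: is_derive_barrier_add_evec.
- move=> i; exact: is_deriveD (is_derive_powquad_d1_0 A p _ (x 0 i) c1)
    (is_derive_powquad_d1_0 B q _ (x 0 i) c2).
- exact: is_derive_barrier_time x s x0 Ks.
rewrite big_split /=.
have := sum_powquad_d2_0_le A p K _ x A0 p0 hK c1 ltac:(lra).
have := sum_powquad_d2_0_le B q 0 _ x B0 q0 ltac:(by rewrite subr0) c2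
  ltac:(by rewrite mul0r addr0).
rewrite mulr0; lra.
Qed.

End BarrierSupersolution.

Section Comparison.
Context {R : realType} {m : nat}.
Variables (Lam sg : R) (u : 'rV[R]_m -> R -> R) (A p K B q M eta t0 r1 r2 t1 : R).
Hypotheses (heat_u : heat_solution Lam u)
  (A0 : 0 <= A) (p0 : p <= 0) (hK : 4 * (1 - p) <= 2 * m%:R - K) (K0 : 0 <= K)
  (B0 : 0 <= B) (q0 : q <= 0) (hq : 4 * (1 - q) <= 2 * m%:R) (eta0 : 0 < eta)
  (r1_gt0 : 0 < r1) (t1_lt : t1 < Lam).
Let W := @barrier R m A p K B q M eta t0.
Let v (z : 'rV[R]_m * R) := sg * u z.1 z.2 - W z.1 z.2.
Let S := [set y : 'rV[R]_m | r1 <= sqnorm y <= r2] `*` [set` `[t0, t1]%R].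

Lemma continuous_within_cylinder : {within S, continuous v}.
Proof.
apply: continuous_in_subspaceT => -[x t]; rewrite inE /S /= in_itv /=.
move=> [/andP[x_r1 _] /andP[t0t tt1]].
have x0 : x != 0 by rewrite -sqnorm_gt0 (lt_le_trans r1_gt0).
have [_ _ _ [u_cont _ _ _] _] := heat_u x t x0 (le_lt_trans tt1 t1_lt).
have sg_cont : {for (x, t), continuous (fun _ : 'rV[R]_m * R => sg)}.
  exact: cst_continuous.
have W_cont := @continuous_barrier R m A p K B q M eta t0 (x, t)
  ltac:(by rewrite sqnorm_gt0) ltac:(by rewrite mulr_ge0 ?subr_ge0).
exact: continuousB (continuousM sg_cont u_cont) W_cont.
Qed.

Lemma cylinder_max_on_parabolic_boundary x s :
  S (x, s) -> (forall z, S z -> v z <= v (x, s)) ->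
  sqnorm x = r1 \/ sqnorm x = r2 \/ s = t0.
Proof.
rewrite /S /= in_itv /= => -[/andP[x_r1 x_r2] /andP[t0s st1]] vmax.
apply: contrapT => /not_orP[/eqP x_ne_r1 /not_orP[/eqP x_ne_r2 /eqP s_ne_t0]].
have x_r1' : r1 < sqnorm x by rewrite lt_neqAle eq_sym x_ne_r1.
have x_r2' : sqnorm x < r2 by rewrite lt_neqAle x_ne_r2.
have t0s' : t0 < s by rewrite lt_neqAle eq_sym s_ne_t0.
have x0 : x != 0 by rewrite -sqnorm_gt0 (lt_trans r1_gt0).
apply: (@barrier_no_interior_max R m A p K B q M eta t0 A0 p0 hK K0 B0 q0 hq eta0
  Lam sg u x s (s - t0) heat_u x0 (le_lt_trans st1 t1_lt) (ltW t0s')) => [||tau t0tau taus].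
- by rewrite subr_gt0.
- near=> y; apply: (vmax (y, s)); split; last by rewrite /= in_itv /= ltW ?t0s'.
  apply/andP; split; apply/ltW; near: y.
    exact: cvgr_gt (@continuous_sqnorm R m x) _ x_r1'.
  exact: cvgr_lt (@continuous_sqnorm R m x) _ x_r2'.
- apply: (vmax (x, tau)); split; first by rewrite x_r1 x_r2.
  by rewrite /= in_itv /=; apply/andP; split; lra.
Unshelve. all: by end_near.
Qed.

Lemma barrier_comparison :
  (forall y tau, r1 <= sqnorm y <= r2 -> t0 <= tau <= t1 ->
     sqnorm y = r1 \/ sqnorm y = r2 \/ tau = t0 -> sg * u y tau <= W y tau) ->
  forall y tau, r1 <= sqnorm y <= r2 -> t0 <= tau <= t1 -> sg * u y tau <= W y tau.
Proof.
move=> boundary y tau y_r tau_t.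
have Sy : S (y, tau) by split; rewrite //= in_itv.
have [[x s] Sxs vmax] := compact_EVT_max (ex_intro _ _ Sy)
  (compact_setX (compact_sqnorm_annulus r1 r2) (@segment_compact R t0 t1))
  continuous_within_cylinder.
have vmax' z : S z -> v z <= v (x, s) by move=> Sz; apply: vmax; rewrite inE.
have {}Sxs : S (x, s) by move: Sxs; rewrite inE.
have vxs_le0 : v (x, s) <= 0.
  rewrite subr_le0; move: (Sxs); rewrite /S /= in_itv /= => -[x_r s_t].
  by apply: boundary => //; exact: cylinder_max_on_parabolic_boundary x s Sxs vmax'.
by move: (vmax' _ Sy) vxs_le0; rewrite /v /=; lra.
Qed.

End Comparison.

Section DecayingSolution.
Context {R : realType} {m : nat}.
Variables (Lam C nu sg : R) (u : 'rV[R]_m -> R -> R).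
Hypotheses (heat_u : heat_solution Lam u) (C0 : 0 < C) (nu0 : 0 < nu)
  (nu_lt : nu < m%:R - 2) (sg_le1 : `|sg| <= 1)
  (u_decay : forall x t, x != 0 -> t < Lam -> `|u x t| <= C * enorm x `^ (- nu)).

Let p : R := 2^-1 * - nu.
Let q : R := 2^-1 * (2 - m%:R).
Let K : R := 2 * m%:R - 4 - 2 * nu.

Fact sg_u_decay y tau : y != 0 -> tau < Lam -> sg * u y tau <= C * sqnorm y `^ p.
Proof.
move=> y0 tauL; rewrite /p -enorm_powR; apply: le_trans (u_decay y tau y0 tauL).
apply: le_trans (ler_norm _) _; rewrite normrM.
by apply: ler_piMl; rewrite ?normr_ge0.
Qed.

Fact barrier_parameters :
  [/\ p < 0, 0 < K, 4 * (1 - p) <= 2 * m%:R - K, q <= 0 & 4 * (1 - q) <= 2 * m%:R].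
Proof. by rewrite /p /K /q; split; move: nu0 nu_lt; lra. Qed.

Section Center.
Variables (delta t : R) (x : 'rV[R]_m).
Hypotheses (delta_gt0 : 0 < delta) (x0 : x != 0) (t_lt : t < Lam).

(* Each of the four terms of the barrier is at most [delta] at [(x, t)]; the time [t - t0]
   is long enough for the first term to decay, the outer radius [r2] makes [M] small,
   and the inner radius [r1] lets the [B] term dominate [C |y|^(-nu)] near 0. *)
Let S0 := (delta / C) `^ p^-1.
Let t0 := t - (S0 / K + 1).
Let r2 := S0 + sqnorm x + 1.
Let M := C * r2 `^ p.
Let B := delta / sqnorm x `^ q.
Let r1 := Num.min (sqnorm x / 2) ((B / C) `^ (p - q)^-1).
Let eta := delta / (t - t0).
Let W := @barrier R m C p K B q M eta t0.

Fact S0_gt0 : 0 < S0.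
Proof. by rewrite powR_gt0 // divr_gt0. Qed.

Fact S0_pow_p : C * S0 `^ p = delta.
Proof.
have [p_lt0 _ _ _ _] := barrier_parameters.
by rewrite /S0 powRK_inv ?divr_gt0 ?ltr0_neq0 // mulrC divfK ?gt_eqF.
Qed.

Fact t0_lt_t : t0 < t.
Proof.
have [_ K_gt0 _ _ _] := barrier_parameters.
by move: (divr_gt0 S0_gt0 K_gt0); rewrite /t0; lra.
Qed.

Fact B_gt0 : 0 < B.
Proof. by rewrite divr_gt0 ?powR_gt0 ?sqnorm_gt0. Qed.

Fact r1_gt0 : 0 < r1.
Proof. by rewrite lt_min divr_gt0 ?sqnorm_gt0 //= powR_gt0 // divr_gt0 ?B_gt0. Qed.

Fact barrier_at_center : W x t <= 4 * delta.
Proof.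
have [p_lt0 K_gt0 _ _ _] := barrier_parameters.
have sqx : 0 < sqnorm x by rewrite sqnorm_gt0.
have time_term : C * (sqnorm x + K * (t - t0)) `^ p <= delta.
  rewrite -S0_pow_p ler_pM2l //; apply: le0_ger_powR; [exact: ltW | exact: S0_gt0 |].
  have -> : K * (t - t0) = S0 + K by rewrite /t0; field; exact: lt0r_neq0.
  lra.
have potential_term : B * (sqnorm x + 0 * (t - t0)) `^ q = delta.
  by rewrite mul0r addr0 /B divfK // gt_eqF ?powR_gt0.
have M_le : M <= delta.
  rewrite -S0_pow_p ler_pM2l //; apply: le0_ger_powR; [exact: ltW | exact: S0_gt0 |].
  by rewrite /r2; lra.
have drift : eta * (t - t0) = delta.
  by rewrite /eta divfK // gt_eqF // subr_gt0 t0_lt_t.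
by rewrite /W /barrier /pow_barrier; lra.
Qed.

Fact barrier_above_on_parabolic_boundary y tau :
  r1 <= sqnorm y <= r2 -> t0 <= tau <= t ->
  sqnorm y = r1 \/ sqnorm y = r2 \/ tau = t0 -> sg * u y tau <= W y tau.
Proof.
have [p_lt0 K_gt0 _ q_le0 _] := barrier_parameters.
move=> /andP[y_r1 y_r2] /andP[t0_tau tau_t] on_boundary.
have y0 : y != 0 by rewrite -sqnorm_gt0 (lt_le_trans r1_gt0).
have decay := sg_u_decay y tau y0 (le_lt_trans tau_t t_lt).
have T1 : 0 <= C * (sqnorm y + K * (tau - t0)) `^ p by rewrite mulr_ge0 ?powR_ge0 ?ltW.
have T2 : 0 <= B * sqnorm y `^ q by rewrite mulr_ge0 ?powR_ge0 ?ltW ?B_gt0.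
have T3 : 0 <= M by rewrite mulr_ge0 ?powR_ge0 ?ltW.
have T4 : 0 <= eta * (tau - t0).
  by rewrite mulr_ge0 ?subr_ge0 // ltW // divr_gt0 // subr_gt0 t0_lt_t.
rewrite /W /barrier /pow_barrier mul0r addr0.
case: on_boundary => [y_eq|[y_eq|tau_eq]].
- suff : C * sqnorm y `^ p <= B * sqnorm y `^ q by lra.
  rewrite y_eq -[p](subrK q) powRD; last by apply/implyP => _; rewrite gt_eqF ?r1_gt0.
  rewrite mulrA ler_pM2r ?powR_gt0 ?r1_gt0 // -ler_pdivlMl // mulrC.
  have r1_le : r1 <= (B / C) `^ (p - q)^-1 by rewrite ge_min lexx orbT.
  have pq : 0 < p - q by rewrite /p /q; move: nu_lt; lra.
  rewrite -(powRK_inv _ _ (divr_gt0 B_gt0 C0) (lt0r_neq0 pq)) ge0_ler_powR ?nnegrE //.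
  - exact: ltW.
  - exact: ltW r1_gt0.
  - exact: powR_ge0.
- have : C * sqnorm y `^ p = M by rewrite /M y_eq.
  lra.
- by move: decay; rewrite tau_eq subrr !mulr0 !addr0; lra.
Qed.

Fact sg_u_le_at_center : sg * u x t <= 4 * delta.
Proof.
have [p_lt0 K_gt0 hK q_le0 hq] := barrier_parameters.
have eta_gt0 : 0 < eta by rewrite divr_gt0 // subr_gt0 t0_lt_t.
have sqx : 0 < sqnorm x by rewrite sqnorm_gt0.
apply: le_trans barrier_at_center.
apply: (@barrier_comparison R m Lam sg u C p K B q M eta t0 r1 r2 t heat_u (ltW C0) (ltW p_lt0)
  hK (ltW K_gt0) (ltW B_gt0) q_le0 hq eta_gt0 r1_gt0 t_lt
  barrier_above_on_parabolic_boundary).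
- have : r1 <= sqnorm x / 2 by rewrite ge_min lexx.
  by move: S0_gt0; rewrite /r2 => ? ?; apply/andP; split; lra.
- by rewrite lexx andbT ltW // t0_lt_t.
Qed.

End Center.

Lemma decaying_solution_scaled_le0 x t : x != 0 -> t < Lam -> sg * u x t <= 0.
Proof.
move=> x0 tL; rewrite leNgt; apply/negP => pos.
have eighth_gt0 : 0 < sg * u x t / 8 by rewrite divr_gt0.
by have := sg_u_le_at_center _ _ _ eighth_gt0 x0 tL; lra.
Qed.

End DecayingSolution.

Theorem proposition6p4 (R : realType) (m : nat) (Lam : R)
  (u : 'rV[R]_m -> R -> R) (C nu : R) :
  (3 <= m)%N ->
  heat_solution Lam u ->
  0 < C -> 0 < nu -> nu < m%:R - 2 ->
  (forall x t, x != 0 -> t < Lam -> `|u x t| <= C * enorm x `^ (- nu)) ->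
  (forall x t, x != 0 -> t < Lam -> grad_norm u x t <= C * enorm x `^ (- nu - 1)) ->
  (forall x t, x != 0 -> t < Lam -> hess_norm u x t <= C * enorm x `^ (- nu - 2)) ->
  forall x t, x != 0 -> t < Lam -> u x t = 0.
Proof.
move=> _ heat_u C0 nu0 nu_lt u_decay _ _ x t x0 tL.
have scaled_le0 sg : `|sg| <= 1 -> sg * u x t <= 0.
  by move=> sg1; exact: (@decaying_solution_scaled_le0 R m Lam C nu sg u heat_u C0 nu0 nu_lt
    sg1 u_decay x t x0 tL).
have := scaled_le0 (-1); have := scaled_le0 1.
rewrite normrN normr1 mul1r mulN1r oppr_le0 => /(_ (lexx _)) u_le0 /(_ (lexx _)) u_ge0.
by apply/eqP; rewrite eq_le u_le0 u_ge0.
Qed.
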